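(* Let $w$ be a positive integer, let $\lambda_0<\lambda_1<\cdots<\lambda_w$ be real numbers with $\lambda_w=\lambda_0+1$, and let $b_0,b_1,\ldots,b_{w-1}$ be integers such that $b_{k-1}\neq b_k$ for $k=1,\ldots,w-1$ and $1+b_{w-1}\neq b_0$. Let \[K'=\bigcup_{k=0}^{w-1}[b_k+\lambda_k,\, b_k+\lambda_{k+1}].\] Then $K'$ is an $\mathcal{N}$-set, and \[(K'-K')\cap\mathbb{N}=\{|b_k-b_{k-1}| : k=1,\ldots,w-1\}\cup\{|1+b_{w-1}-b_0|\},\] which is a finite set of relatively prime positive integers.
   Context: $\mathbb{N}$ denotes the set of positive integers. $K-K=\{x-y : x,y\in K\}$. A set of integers is relatively prime if it is nonempty and its elements have no common factor greater than $1$. An $\mathcal{N}$-set in $\mathbb{R}^n$ is a compact set $K\subseteq\mathbb{R}^n$ such that for every $x\in\mathbb{R}^n$ there exists $y\in K$ with $x-y\in\mathbb{Z}^n$. *)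

From Stdlib Require Import Reals Lra Lia ZArith Arith List.
Open Scope R_scope.

Definition N_set (K : R -> Prop) : Prop :=
  compact K /\ forall x : R, exists y : R, K y /\ exists z : Z, x - y = IZR z.

Definition Kprime (w : nat) (lam : nat -> R) (b : nat -> Z) (x : R) : Prop :=
  exists k : nat, (k < w)%nat /\
    IZR (b k) + lam k <= x /\ x <= IZR (b k) + lam (S k).

(* (K - K) ∩ N, with N the positive integers *)
Definition diff_pos_nat (K : R -> Prop) (n : nat) : Prop :=
  (0 < n)%nat /\ exists x y : R, K x /\ K y /\ x - y = INR n.

Definition Dset (w : nat) (b : nat -> Z) (n : nat) : Prop :=
  (exists k : nat, (1 <= k)%nat /\ (k <= w - 1)%nat /\
      n = Z.abs_nat (b k - b (k - 1)%nat)%Z)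
  \/ n = Z.abs_nat (1 + b (w - 1)%nat - b 0%nat)%Z.

Definition finite_nat_set (S : nat -> Prop) : Prop :=
  exists l : list nat, forall n, S n <-> In n l.

Definition rel_prime_set (S : nat -> Prop) : Prop :=
  (exists n, S n) /\
  forall d : nat, (forall n, S n -> Nat.divide d n) -> d = 1%nat.

From Stdlib Require Import Reals ZArith Arith List Lra Lia.
Open Scope R_scope.

(* Write every point of K' as b_k + t with t in the piece
   I_k = [lam_k, lam_{k+1}].  The pieces I_0, ..., I_{w-1} tile
   [lam_0, lam_0 + 1], a fundamental domain of R/Z; hence K' meets every
   class mod Z, and it is compact as a finite union of closed intervals.
   If b_j + u and b_k + v (u in I_j, v in I_k) differ by an integer, then
   u - v is an integer in [-1, 1]; since the pieces only overlap at common
   endpoints, either j = k, or the two pieces are adjacent and u = v, or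
   u, v are the two endpoints lam_w, lam_0 of the whole tiling.  This
   identifies the positive integers of K' - K' with the gaps |b_k - b_{k-1}|
   and |1 + b_{w-1} - b_0|.  Finally these gaps telescope to 1, so any
   common divisor of them divides 1.
   The file first proves general facts (compactness of finite unions, integer
   gaps in a set, telescoping divisibility), then the geometry of the pieces,
   then the properties of K' and of the gap set; the theorem collects them. *)

Lemma compact_union (A B : R -> Prop) :
  compact A -> compact B -> compact (fun x => A x \/ B x).
Proof.
  intros HA HB f [Hcov Hopen].
  destruct (HA f) as [DA [HDA [lA HlA]]].
  { split; [|exact Hopen]. intros x Hx. apply Hcov; left; exact Hx. }
  destruct (HB f) as [DB [HDB [lB HlB]]].
  { split; [|exact Hopen]. intros x Hx. apply Hcov; right; exact Hx. }
  exists (fun i => DA i \/ DB i). split.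
  - intros x [Hx|Hx].
    + destruct (HDA x Hx) as [y Hy]. exists y. simpl in *. tauto.
    + destruct (HDB x Hx) as [y Hy]. exists y. simpl in *. tauto.
  - exists (lA ++ lB). intros x. rewrite in_app_iff. simpl in *.
    unfold intersection_domain in *. rewrite <- HlA, <- HlB. tauto.
Qed.

Lemma compact_finite_union (P : nat -> R -> Prop) :
  (forall k, compact (P k)) ->
  forall n, compact (fun x => exists k, (k < n)%nat /\ P k x).
Proof.
  intros HP n; induction n as [|n IH].
  - apply (compact_eqDom _ _ compact_EMP). split; intros x Hx.
    + destruct Hx.
    + destruct Hx as [k [Hk _]]; lia.
  - apply (compact_eqDom _ _ (compact_union _ _ IH (HP n))). split; intros x Hx.
    + destruct Hx as [[k [Hk Hx]]|Hx]; [exists k | exists n]; split; auto; lia.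
    + destruct Hx as [k [Hk Hx]].
      destruct (Nat.eq_dec k n) as [->|Hne]; [right; exact Hx|].
      left; exists k; split; auto; lia.
Qed.

Lemma diff_pos_nat_of_int_gap (K : R -> Prop) (x y : R) (z : Z) :
  K x -> K y -> x - y = IZR z -> z <> 0%Z -> diff_pos_nat K (Z.abs_nat z).
Proof.
  intros Hx Hy Hxy Hz. split; [lia|].
  rewrite INR_IZR_INZ, Nat2Z.inj_abs_nat.
  destruct (Z.abs_spec z) as [[_ ->]|[_ ->]].
  - exists x, y. auto.
  - exists y, x. rewrite opp_IZR. repeat split; auto; lra.
Qed.

Lemma IZR_unit_interval (z : Z) :
  -1 <= IZR z <= 1 -> (z = -1 \/ z = 0 \/ z = 1)%Z.
Proof.
  intros [H1 H2]. apply le_IZR in H1. apply le_IZR in H2. lia.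
Qed.

Lemma divide_telescope (d : Z) (b : nat -> Z) (m : nat) :
  (forall k, (1 <= k <= m)%nat -> Z.divide d (b k - b (k - 1)%nat)) ->
  Z.divide d (b m - b 0%nat).
Proof.
  intros Hstep. induction m as [|m IH].
  - rewrite Z.sub_diag. apply Z.divide_0_r.
  - replace (b (S m) - b 0%nat)%Z
      with ((b (S m) - b (S m - 1)%nat) + (b m - b 0%nat))%Z
      by (replace (S m - 1)%nat with m by lia; ring).
    apply Z.divide_add_r; [apply Hstep; lia|].
    apply IH. intros k Hk. apply Hstep. lia.
Qed.

(* Consecutive intervals [lam_k, lam_{k+1}], k < w, cover [lam_0, lam_w]
   (no monotonicity needed: take the last k with lam_k <= t). *)
Lemma pieces_cover (w : nat) (lam : nat -> R) (t : R) :
  (0 < w)%nat -> lam 0%nat <= t <= lam w ->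
  exists k, (k < w)%nat /\ lam k <= t <= lam (S k).
Proof.
  intros hw Ht. destruct w as [|n]; [lia|]. clear hw.
  induction n as [|n IH].
  - exists 0%nat; split; [lia|lra].
  - destruct (Rle_dec t (lam (S n))) as [Hle|Hgt].
    + destruct (IH ltac:(lra)) as [k [Hk Hkt]]. exists k; split; [lia|lra].
    + exists (S n); split; [lia|lra].
Qed.

Section Tiling.
Variables (w : nat) (lam : nat -> R).
Hypothesis hlam : forall k : nat, (k < w)%nat -> lam k < lam (S k).

Lemma lam_lt : forall i j, (i < j)%nat -> (j <= w)%nat -> lam i < lam j.
Proof.
  intros i j Hij Hj. induction j as [|j IH]; [lia|].
  pose proof (hlam j ltac:(lia)).
  destruct (Nat.eq_dec i j) as [->|Hne]; [lra|].
  pose proof (IH ltac:(lia) ltac:(lia)). lra.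
Qed.

Lemma lam_le : forall i j, (i <= j)%nat -> (j <= w)%nat -> lam i <= lam j.
Proof.
  intros i j Hij Hj. destruct (Nat.eq_dec i j) as [->|Hne]; [lra|].
  apply Rlt_le, lam_lt; lia.
Qed.

Hypothesis hlamw : lam w = lam 0%nat + 1.

Lemma congruent_points (j k : nat) (u v : R) (z : Z) :
  (j < w)%nat -> (k < w)%nat ->
  lam j <= u <= lam (S j) -> lam k <= v <= lam (S k) -> u - v = IZR z ->
  (z = 0%Z /\ (j = k \/ j = S k \/ k = S j)) \/
  (z = 1%Z /\ j = (w - 1)%nat /\ k = 0%nat) \/
  (z = (-1)%Z /\ j = 0%nat /\ k = (w - 1)%nat).
Proof.
  intros Hj Hk Hu Hv Huv.
  pose proof (lam_le 0 j ltac:(lia) ltac:(lia)).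
  pose proof (lam_le 0 k ltac:(lia) ltac:(lia)).
  pose proof (lam_le (S j) w ltac:(lia) ltac:(lia)).
  pose proof (lam_le (S k) w ltac:(lia) ltac:(lia)).
  assert (Hbot : forall i, (i <= w)%nat -> lam i <= lam 0%nat -> i = 0%nat).
  { intros i Hi Hle. destruct (Nat.eq_dec i 0); auto.
    pose proof (lam_lt 0 i ltac:(lia) Hi). lra. }
  assert (Htop : forall i, (i <= w)%nat -> lam w <= lam i -> i = w).
  { intros i Hi Hle. destruct (Nat.eq_dec i w); auto.
    pose proof (lam_lt i w ltac:(lia) (le_n w)). lra. }
  destruct (IZR_unit_interval z) as [-> | [-> | ->]]; [rewrite <- Huv; lra|..].
  - right; right. split; [reflexivity|].
    assert (S k = w) by (apply Htop; lia || lra).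
    split; [apply Hbot; lia || lra | lia].
  - left. split; [reflexivity|].
    destruct (Nat.lt_total j k) as [Hjk|[->|Hjk]]; [|auto|].
    + right; right. destruct (Nat.eq_dec k (S j)); auto.
      pose proof (lam_lt (S j) k ltac:(lia) ltac:(lia)). lra.
    + right; left. destruct (Nat.eq_dec j (S k)); auto.
      pose proof (lam_lt (S k) j ltac:(lia) ltac:(lia)). lra.
  - right; left. split; [reflexivity|].
    assert (S j = w) by (apply Htop; lia || lra).
    split; [lia | apply Hbot; lia || lra].
Qed.

End Tiling.

Section Kprime.
Variables (w : nat) (lam : nat -> R) (b : nat -> Z).
Hypothesis hw : (0 < w)%nat.
Hypothesis hlam : forall k : nat, (k < w)%nat -> lam k < lam (S k).
Hypothesis hlamw : lam w = lam 0%nat + 1.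

Lemma Kprime_intro (k : nat) (t : R) :
  (k < w)%nat -> lam k <= t <= lam (S k) -> Kprime w lam b (IZR (b k) + t).
Proof. intros Hk Ht. exists k. split; [exact Hk | lra]. Qed.

(* K' is compact, and every real x is congruent mod Z to a point of K':
   shift x into [lam_0, lam_0 + 1) and move it by b_k. *)
Lemma Kprime_N_set : N_set (Kprime w lam b).
Proof.
  split.
  - apply (compact_finite_union
             (fun k x => IZR (b k) + lam k <= x <= IZR (b k) + lam (S k))).
    intros k. apply compact_P3.
  - intros x.
    destruct (archimed (x - lam 0%nat)) as [Hup1 Hup2].
    set (m := (up (x - lam 0%nat) - 1)%Z).
    assert (Hm : IZR m = IZR (up (x - lam 0%nat)) - 1)
      by (unfold m; rewrite minus_IZR; reflexivity).
    destruct (pieces_cover w lam (x - IZR m) hw) as [k [Hk Ht]]; [lra|].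
    exists (IZR (b k) + (x - IZR m)). split; [apply Kprime_intro; assumption|].
    exists (m - b k)%Z. rewrite minus_IZR. lra.
Qed.

Lemma Kprime_diff_in_Dset (n : nat) :
  diff_pos_nat (Kprime w lam b) n -> Dset w b n.
Proof.
  intros [Hn [x [y [[j [Hj Hx]] [[k [Hk Hy]] Hxy]]]]].
  assert (Hgap : x - IZR (b j) - (y - IZR (b k)) = IZR (Z.of_nat n - b j + b k))
    by (rewrite plus_IZR, minus_IZR, <- INR_IZR_INZ; lra).
  destruct (congruent_points w lam hlam hlamw j k (x - IZR (b j)) (y - IZR (b k)) _ Hj Hk
              ltac:(lra) ltac:(lra) Hgap)
    as [[Hz Hjk] | [[Hz [-> ->]] | [Hz [-> ->]]]].
  - destruct Hjk as [-> | [-> | ->]]; [lia | |].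
    + left. exists (S k). replace (S k - 1)%nat with k by lia. split; lia.
    + left. exists (S j). replace (S j - 1)%nat with j by lia. split; lia.
  - right. lia.
  - right. lia.
Qed.

Hypothesis hb : forall k : nat, (1 <= k)%nat -> (k <= w - 1)%nat -> b (k - 1)%nat <> b k.
Hypothesis hbw : (1 + b (w - 1)%nat)%Z <> b 0%nat.

(* Conversely each gap is realised: |b_k - b_{k-1}| by the common endpoint
   lam_k of I_{k-1} and I_k, and |1 + b_{w-1} - b_0| by lam_w and lam_0. *)

Lemma Dset_in_Kprime_diff (n : nat) :
  Dset w b n -> diff_pos_nat (Kprime w lam b) n.
Proof.
  intros [[k [Hk1 [Hkw ->]]] | ->].
  - assert (Hk : S (k - 1) = k) by lia.
    pose proof (hlam k ltac:(lia)) as Hcur.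
    pose proof (hlam (k - 1)%nat ltac:(lia)) as Hprev. rewrite Hk in Hprev.
    apply (diff_pos_nat_of_int_gap _ (IZR (b k) + lam k)
             (IZR (b (k - 1)%nat) + lam k)).
    + apply Kprime_intro; [lia | lra].
    + apply Kprime_intro; [lia | rewrite Hk; lra].
    + rewrite minus_IZR. lra.
    + specialize (hb k Hk1 Hkw). lia.
  - assert (Hw : S (w - 1) = w) by lia.
    pose proof (hlam 0%nat hw) as Hfirst.
    pose proof (hlam (w - 1)%nat ltac:(lia)) as Hlast. rewrite Hw in Hlast.
    apply (diff_pos_nat_of_int_gap _ (IZR (b (w - 1)%nat) + lam w)
             (IZR (b 0%nat) + lam 0%nat)).
    + apply Kprime_intro; [lia | rewrite Hw; lra].
    + apply Kprime_intro; [exact hw | lra].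
    + rewrite minus_IZR, plus_IZR. lra.
    + lia.
Qed.

End Kprime.

Lemma Dset_pos (w : nat) (b : nat -> Z) :
  (forall k : nat, (1 <= k)%nat -> (k <= w - 1)%nat -> b (k - 1)%nat <> b k) ->
  (1 + b (w - 1)%nat)%Z <> b 0%nat ->
  forall n, Dset w b n -> (0 < n)%nat.
Proof.
  intros hb hbw n [[k [Hk1 [Hkw ->]]] | ->]; [specialize (hb k Hk1 Hkw) |]; lia.
Qed.

Lemma Dset_finite (w : nat) (b : nat -> Z) : finite_nat_set (Dset w b).
Proof.
  exists (map (fun k => Z.abs_nat (b k - b (k - 1)%nat)) (seq 1 (w - 1))
          ++ Z.abs_nat (1 + b (w - 1)%nat - b 0%nat) :: nil).
  intros n. rewrite in_app_iff, in_map_iff. simpl. split.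
  - intros [[k [Hk1 [Hkw ->]]] | ->].
    + left. exists k. rewrite in_seq. split; [reflexivity | lia].
    + right; left; reflexivity.
  - intros [[k [<- Hk]] | [<- | []]].
    + left. rewrite in_seq in Hk. exists k. split; [lia | split; [lia | reflexivity]].
    + right; reflexivity.
Qed.

(* The gaps b_k - b_{k-1} telescope to b_{w-1} - b_0, and adding the last gap
   1 + b_{w-1} - b_0 leaves 1: a common divisor divides 1. *)
Lemma Dset_rel_prime (w : nat) (b : nat -> Z) : rel_prime_set (Dset w b).
Proof.
  split; [exists (Z.abs_nat (1 + b (w - 1)%nat - b 0%nat)); right; reflexivity|].
  intros d Hd.
  assert (Hdiv : forall z, Nat.divide d (Z.abs_nat z) -> Z.divide (Z.of_nat d) z).
  { intros z [q Hq]. apply Z.divide_abs_r. exists (Z.of_nat q).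
    rewrite <- Nat2Z.inj_abs_nat, Hq. lia. }
  assert (Hchain : Z.divide (Z.of_nat d) (b (w - 1)%nat - b 0%nat)).
  { apply divide_telescope. intros k Hk. apply Hdiv, Hd.
    left. exists k. split; [lia | split; [lia | reflexivity]]. }
  assert (Hone : Z.divide (Z.of_nat d) 1).
  { replace 1%Z with ((1 + b (w - 1)%nat - b 0%nat) - (b (w - 1)%nat - b 0%nat))%Z
      by ring.
    apply Z.divide_sub_r; [apply Hdiv, Hd; right; reflexivity | exact Hchain]. }
  apply Z.divide_1_r in Hone. lia.
Qed.

Theorem mainTheorem3 (w : nat) (lam : nat -> R) (b : nat -> Z)
  (hw : (0 < w)%nat)
  (hlam : forall k : nat, (k < w)%nat -> lam k < lam (S k))
  (hlamw : lam w = lam 0%nat + 1)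
  (hb : forall k : nat, (1 <= k)%nat -> (k <= w - 1)%nat -> b (k - 1)%nat <> b k)
  (hbw : (1 + b (w - 1)%nat)%Z <> b 0%nat) :
  N_set (Kprime w lam b) /\
  (forall n : nat, diff_pos_nat (Kprime w lam b) n <-> Dset w b n) /\
  finite_nat_set (Dset w b) /\
  (forall n : nat, Dset w b n -> (0 < n)%nat) /\
  rel_prime_set (Dset w b).
Proof.
  split; [exact (Kprime_N_set w lam b hw hlamw) |].
  split.
  { intros n. split.
    - exact (Kprime_diff_in_Dset w lam b hw hlam hlamw n).
    - exact (Dset_in_Kprime_diff w lam b hw hlam hlamw hb hbw n). }
  split; [exact (Dset_finite w b) |].
  split; [exact (Dset_pos w b hb hbw) |].
  exact (Dset_rel_prime w b).
Qed.
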